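(* Let $\varepsilon>0$ and let $r,s\in\mathbb{C}\setminus\{0\}$ with $s/r\notin\mathbb{R}$. Then for all piecewise continuous functions $\mathbf{f},\mathbf{g}:[a,b]\to\mathbb{C}^d$ and all $t\in[a,b]$, \[ \Box^{[r,s]}_\varepsilon(\mathbf f\cdot\mathbf g)(t)=\mathbf f(t)\cdot\Box^{[r,s]}_\varepsilon\mathbf g(t)+\mathbf g(t)\cdot\Box^{[r,s]}_\varepsilon\mathbf f(t) +\frac{\varepsilon(r\bar s^2-\bar r^2 s)}{(r\bar s-\bar r s)^2}\,\Box^{[r,s]}_\varepsilon\mathbf f(t)\cdot\Box^{[r,s]}_\varepsilon\mathbf g(t) -\frac{\varepsilon rs(r-s)}{(r\bar s-\bar r s)^2}\,\Box^{[\bar r,\bar s]}_\varepsilon\mathbf f(t)\cdot\Box^{[\bar r,\bar s]}_\varepsilon\mathbf g(t) +\frac{\varepsilon rs(\bar r-\bar s)}{(r\bar s-\bar r s)^2}\Big(\Box^{[r,s]}_\varepsilon\mathbf f(t)\cdot\Box^{[\bar r,\bar s]}_\varepsilon\mathbf g(t)+\Box^{[\bar r,\bar s]}_\varepsilon\mathbf f(t)\cdot\Box^{[r,s]}_\varepsilon\mathbf g(t)\Big). \]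
   Context: Fix an interval $[a,b]$ and a time step $\varepsilon>0$. For each integer $\ell$, $\chi_\ell$ denotes the characteristic (indicator) function of the interval $[\max(a,a+\ell\varepsilon),\min(b,b+\ell\varepsilon)]$. For $r,s\in\mathbb{C}$ and a function $\mathbf x:[a,b]\to\mathbb{C}^d$, the operator $\Box^{[r,s]}_\varepsilon$ is defined for $t\in[a,b]$ by \[ \Box^{[r,s]}_\varepsilon\mathbf x(t)=-\chi_{1}(t)\frac{s}{\varepsilon}\mathbf x(t-\varepsilon)+\frac{s-r}{\varepsilon}\mathbf x(t)+\chi_{-1}(t)\frac{r}{\varepsilon}\mathbf x(t+\varepsilon), \] with the convention that a term multiplied by a vanishing characteristic function is $0$ (even if the argument lies outside $[a,b]$). The operator acts componentwise on vector-valued functions and also applies to scalar functions. Here $\mathbf f\cdot\mathbf g=\sum_{j=1}^d f_jg_j$ is the bilinear (non-conjugated) dot product, and $\bar r$ denotes complex conjugation. *)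

(* The complex numbers are modelled by an arbitrary
   numeric algebraically closed field C (numClosedFieldType, e.g. algC),
   and the real line by its real elements (x \is Num.real). *)
From HB Require Import structures.
From mathcomp Require Import all_boot all_order all_algebra.
Set Implicit Arguments. Unset Strict Implicit. Unset Printing Implicit Defensive.
Import Order.TTheory GRing.Theory Num.Theory.
Local Open Scope ring_scope.

Section Box.
Variable C : numClosedFieldType.

Definition chi (a b eps : C) (l : int) (t : C) : C :=
  if (Num.max a (a + l%:~R * eps) <= t) && (t <= Num.min b (b + l%:~R * eps))
  then 1 else 0.

(* The operator Box^{[r,s]}_eps on scalar functions; a term multiplied by a
   vanishing characteristic function is 0. *)
Definition boxs (a b eps r s : C) (x : C -> C) (t : C) : C :=
  (if chi a b eps 1 t == 0 then 0 else - (s / eps) * x (t - eps))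
  + (s - r) / eps * x t
  + (if chi a b eps (-1) t == 0 then 0 else r / eps * x (t + eps)).

Definition box (d : nat) (a b eps r s : C) (x : C -> 'rV[C]_d) (t : C)
  : 'rV[C]_d :=
  \row_(j < d) boxs a b eps r s (fun u => x u 0 j) t.

(* Bilinear (non-conjugated) dot product. *)
Definition dot (d : nat) (u v : 'rV[C]_d) : C := \sum_(j < d) u 0 j * v 0 j.

(* Piecewise continuity of f : [a,b] -> C^d (values outside [a,b] are
   irrelevant): there is a partition a = p_0 < p_1 < ... < p_n = b of real
   points such that on each open piece (p_k, p_{k+1}) every component of f
   is continuous and has finite one-sided limits at both endpoints. *)
Definition cont_on_open (h : C -> C) (u v : C) : Prop :=
  forall x, x \is Num.real -> u < x < v ->
  forall e, 0 < e -> exists2 del, 0 < del &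
    forall y, y \is Num.real -> u < y < v -> `|y - x| < del -> `|h y - h x| < e.

Definition right_lim_exists (h : C -> C) (u v : C) : Prop :=
  exists L, forall e, 0 < e -> exists2 del, 0 < del &
    forall y, y \is Num.real -> u < y < v -> y < u + del -> `|h y - L| < e.

Definition left_lim_exists (h : C -> C) (u v : C) : Prop :=
  exists L, forall e, 0 < e -> exists2 del, 0 < del &
    forall y, y \is Num.real -> u < y < v -> v - del < y -> `|h y - L| < e.

Definition piecewise_continuous (d : nat) (a b : C) (f : C -> 'rV[C]_d)
  : Prop :=
  exists p : seq C,
    [/\ all (fun x => x \is Num.real) (a :: p),
        sorted <%R (a :: p), last a p = b &
        forall k, (k < size p)%N ->
          let u := nth a (a :: p) k in
          let v := nth a (a :: p) k.+1 in
          forall j : 'I_d,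
            [/\ cont_on_open (fun x => f x 0 j) u v,
                right_lim_exists (fun x => f x 0 j) u v &
                left_lim_exists (fun x => f x 0 j) u v]].

End Box.

(* At a fixed point t, Box^{[r,s]}_eps x (t) = (s * bwd x + r * fwd x) / eps,
   where bwd x = x(t) - x(t-eps) and fwd x = x(t+eps) - x(t) are the backward
   and forward differences (a neighbour value is replaced by 0 when the
   corresponding characteristic function vanishes).  Both differences obey
   a discrete Leibniz rule, bwd (xy) = x bwd y + y bwd x - bwd x bwd y and
   fwd (xy) = x fwd y + y fwd x + fwd x fwd y, so Box (xy) is x Box y + y Box x
   plus the quadratic remainder (r fwd x fwd y - s bwd x bwd y) / eps.  When
   r s' - r' s != 0, the two differences are determined (Cramer's rule) by
   Box^{[r,s]} and Box^{[r',s']}, which rewrites that remainder as the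
   bilinear combination of the theorem; this is a pure field identity.
   With r' = conj r, s' = conj s, the condition r s' - r' s != 0 is exactly
   s / r not being real.  Finally Box commutes with finite sums, so the
   scalar product rule lifts to the bilinear dot product on C^d. *)
From HB Require Import structures.
From mathcomp Require Import all_boot all_order all_algebra ring.
Import Order.TTheory GRing.Theory Num.Theory.
Local Open Scope ring_scope.

Lemma leibniz_remainder (F : fieldType) (e r s r' s' m1 p1 m2 p2 : F) :
  e != 0 -> r * s' - r' * s != 0 ->
  let D := (r * s' - r' * s) ^+ 2 in
  let B1 := (s * m1 + r * p1) / e in
  let B2 := (s * m2 + r * p2) / e in
  let B1' := (s' * m1 + r' * p1) / e in
  let B2' := (s' * m2 + r' * p2) / e in
  (r * (p1 * p2) - s * (m1 * m2)) / e =
    e * (r * s' ^+ 2 - r' ^+ 2 * s) / D * (B1 * B2)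
    - e * r * s * (r - s) / D * (B1' * B2')
    + e * r * s * (r' - s') / D * (B1 * B2' + B1' * B2).
Proof.
move=> he hD D B1 B2 B1' B2'; rewrite /D /B1 /B2 /B1' /B2'.
by field; rewrite he hD.
Qed.

(* If s / r is not real, then r * conj s - conj r * s != 0: otherwise
   conj (s / r) = conj s / conj r = s / r. *)
Lemma conj_cross_neq0 (C : numClosedFieldType) (r s : C) :
  r != 0 -> s / r \notin Num.real -> r * Num.conj s - Num.conj r * s != 0.
Proof.
move=> hr; apply: contraNN; rewrite subr_eq0 => /eqP hcross.
apply/CrealP; rewrite fmorph_div /=; apply/eqP.
by rewrite eqr_div ?conjC_eq0 // mulrC hcross mulrC.
Qed.

Section DiscreteLeibniz.
Variables (C : numClosedFieldType) (a b eps : C).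

Definition bwd (x : C -> C) (t : C) : C :=
  x t - (if chi a b eps 1 t == 0 then 0 else x (t - eps)).

Definition fwd (x : C -> C) (t : C) : C :=
  (if chi a b eps (-1) t == 0 then 0 else x (t + eps)) - x t.

Lemma boxs_bwd_fwd (r s : C) (x : C -> C) (t : C) :
  boxs a b eps r s x t = (s * bwd x t + r * fwd x t) / eps.
Proof.
rewrite /boxs /bwd /fwd.
by case: (chi a b eps 1 t == 0); case: (chi a b eps (-1) t == 0); ring.
Qed.

Lemma bwd_mul (x y : C -> C) (t : C) :
  bwd (fun u => x u * y u) t = x t * bwd y t + y t * bwd x t - bwd x t * bwd y t.
Proof. by rewrite /bwd; case: (chi a b eps 1 t == 0); ring. Qed.

Lemma fwd_mul (x y : C -> C) (t : C) :
  fwd (fun u => x u * y u) t = x t * fwd y t + y t * fwd x t + fwd x t * fwd y t.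
Proof. by rewrite /fwd; case: (chi a b eps (-1) t == 0); ring. Qed.

Lemma boxs_sum (I : Type) (l : seq I) (h : I -> C -> C) (r s t : C) :
  boxs a b eps r s (fun u => \sum_(i <- l) h i u) t =
  \sum_(i <- l) boxs a b eps r s (h i) t.
Proof.
elim: l => [|i l IH]; rewrite /boxs ?big_nil; last rewrite !big_cons -{}IH /boxs.
all: by case: (chi a b eps 1 t == 0); case: (chi a b eps (-1) t == 0); ring.
Qed.

Lemma boxs_mul (r s r' s' t : C) (x y : C -> C) :
  eps != 0 -> r * s' - r' * s != 0 ->
  let D := (r * s' - r' * s) ^+ 2 in
  boxs a b eps r s (fun u => x u * y u) t =
    x t * boxs a b eps r s y t + y t * boxs a b eps r s x t
    + eps * (r * s' ^+ 2 - r' ^+ 2 * s) / D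
        * (boxs a b eps r s x t * boxs a b eps r s y t)
    - eps * r * s * (r - s) / D
        * (boxs a b eps r' s' x t * boxs a b eps r' s' y t)
    + eps * r * s * (r' - s') / D
        * (boxs a b eps r s x t * boxs a b eps r' s' y t
           + boxs a b eps r' s' x t * boxs a b eps r s y t).
Proof.
move=> he hD D.
have remainder := @leibniz_remainder C eps r s r' s'
  (bwd x t) (fwd x t) (bwd y t) (fwd y t) he hD.
cbv zeta in remainder; rewrite -!boxs_bwd_fwd in remainder.
have leibniz : boxs a b eps r s (fun u => x u * y u) t =
    x t * boxs a b eps r s y t + y t * boxs a b eps r s x t
    + (r * (fwd x t * fwd y t) - s * (bwd x t * bwd y t)) / eps.
  by rewrite !boxs_bwd_fwd bwd_mul fwd_mul; field.
by rewrite leibniz remainder; ring.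
Qed.

End DiscreteLeibniz.

Theorem mainTheorem1 (C : numClosedFieldType) (d : nat) (a b eps r s : C)
  (ha : a \is Num.real) (hb : b \is Num.real) (hab : a < b)
  (heps : 0 < eps) (hr : r != 0) (hs : s != 0) (hsr : s / r \notin Num.real)
  (f g : C -> 'rV[C]_d)
  (hf : piecewise_continuous a b f) (hg : piecewise_continuous a b g)
  (t : C) (ht : t \is Num.real) (hat : a <= t) (htb : t <= b) :
  let rc := Num.conj r in
  let sc := Num.conj s in
  let D := (r * sc - rc * s) ^+ 2 in
  boxs a b eps r s (fun u => dot (f u) (g u)) t =
    dot (f t) (box a b eps r s g t) + dot (g t) (box a b eps r s f t)
    + eps * (r * sc ^+ 2 - rc ^+ 2 * s) / D
        * dot (box a b eps r s f t) (box a b eps r s g t)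
    - eps * r * s * (r - s) / D
        * dot (box a b eps rc sc f t) (box a b eps rc sc g t)
    + eps * r * s * (rc - sc) / D
        * (dot (box a b eps r s f t) (box a b eps rc sc g t)
           + dot (box a b eps rc sc f t) (box a b eps r s g t)).
Proof.
move=> rc sc D.
have he : eps != 0 by rewrite gt_eqF.
have hD : r * sc - rc * s != 0 by exact: conj_cross_neq0.
rewrite /dot boxs_sum.
under eq_bigr => j _ do rewrite (@boxs_mul C a b eps r s rc sc t _ _ he hD).
rewrite !mulr_sumr -sumrN -!big_split /=.
rewrite mulr_sumr -big_split /=.
by apply: eq_bigr => j _; rewrite !mxE.
Qed.
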